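(* Let $P$ be a shortest path (a path of minimum length between its two end vertices) in a honeycomb toroidal graph $\mathrm{HTG}(m,n,\ell)$, and let $0\le i\le m-2$. If $P$ contains two flat edges between column $i$ and column $i+1$ that are consecutive among the flat edges of $P$ between these two columns, then some jump edge of $P$ lies between them along $P$. In particular, if $P$ contains no jump edge, then $P$ contains at most one flat edge between column $i$ and column $i+1$, for each $i$.
   Context: Honeycomb toroidal graph: let $m\ge 1$ be an integer, $n\ge 4$ an even integer, and $\ell$ an integer with $\ell\equiv m \pmod 2$. The graph $\mathrm{HTG}(m,n,\ell)$ has vertex set $\{u_{i,j}: 0\le i\le m-1,\ j\in\mathbb{Z}_n\}$ (second subscripts are taken modulo $n$; the vertices $u_{i,0},\dots,u_{i,n-1}$ form column $i$) and the following edges: vertical edges $u_{i,j}u_{i,j+1}$ for all $0\le i\le m-1$ and all $j$; flat edges $u_{i,j}u_{i+1,j}$ for $0\le i\le m-2$ and all $j$ with $i+j$ odd; jump edges $u_{m-1,j}u_{0,j+\ell}$ for all $j$ with $j\equiv m\pmod 2$. Only parameters for which this is a simple 3-regular graph are allowed (in particular, when $m=1$ one requires $\ell\not\equiv\pm1\pmod n$). *)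

From mathcomp Require Import all_boot all_order all_algebra.
Set Implicit Arguments. Unset Strict Implicit. Unset Printing Implicit Defensive.
Import Order.TTheory GRing.Theory Num.Theory.

(* Vertex u_{i,j} of HTG(m,n,l) is the pair (i, j) : 'I_m * 'I_n.
   Column index = first component, row index (taken mod n) = second. *)
Definition htg_vertex (m n : nat) := ('I_m * 'I_n)%type.

Section HTG.
Variables (m n : nat) (l : int).
Local Notation V := (htg_vertex m n).

Definition row (x : V) : int := Posz (nat_of_ord x.2).
Definition col (x : V) : nat := nat_of_ord x.1.

Definition vertical_edge (x y : V) : bool :=
  (col x == col y) &&
  ((row y == ((row x + 1) %% Posz n)%Z) || (row x == ((row y + 1) %% Posz n)%Z)).

Definition flat_edge_dir (i : nat) (x y : V) : bool :=
  [&& col x == i, col y == i.+1, i.+1 < m, row x == row y & odd (i + x.2)].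

Definition flat_edge (i : nat) (x y : V) : bool :=
  flat_edge_dir i x y || flat_edge_dir i y x.

Definition jump_edge_dir (x y : V) : bool :=
  [&& col x == m.-1, col y == 0%N, odd x.2 == odd m &
      row y == ((row x + l) %% Posz n)%Z].

Definition jump_edge (x y : V) : bool := jump_edge_dir x y || jump_edge_dir y x.

Definition htg_adj (x y : V) : bool :=
  vertical_edge x y || [exists i : 'I_m, flat_edge i x y] || jump_edge x y.

Definition htg_params : Prop :=
  [/\ (1 <= m)%N, (4 <= n)%N, ~~ odd n, odd `|l|%N = odd m &
      (m = 1%N -> ((l %% Posz n)%Z != 1) && ((l %% Posz n)%Z != (Posz n - 1)%R))].

Definition shortest_path (x : V) (s : seq V) : Prop :=
  [/\ path htg_adj x s, uniq (x :: s) &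
      forall t : seq V, path htg_adj x t -> last x t = last x s ->
        (size s <= size t)%N].

(* The k-th edge of the path x :: s joins its k-th and (k+1)-th vertices. *)
Definition pv (x : V) (s : seq V) (k : nat) : V := nth x (x :: s) k.

End HTG.

From Pilot Require Import Defs.
From mathcomp Require Import all_boot all_order all_algebra.
From mathcomp Require Import zify.
Set Implicit Arguments. Unset Strict Implicit.

(* Suppose a shortest path P uses two flat edges between columns i and i+1,
   consecutive among such edges of P, and no jump edge in between.  Each
   edge between them is vertical or flat between other columns, so this
   middle segment stays on one side of the cut between columns i and i+1;
   hence the two flat edges cross the cut in opposite directions and P
   leaves and re-enters the same column c.  Projecting the middle segment
   onto column c (keeping rows) sends vertical edges to vertical edges and
   flat edges to a standstill, and the two flat edges disappear: this is a
   walk with the same end vertices and one step fewer, contradicting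
   minimality. *)

Section LazyWalks.
Variables (T : eqType) (e : rel T).

Definition lazy_rel : rel T := fun a b => (a == b) || e a b.

Lemma lazy_walk_shorten x t : path lazy_rel x t ->
  exists2 t', path e x t' & last x t' = last x t /\ (size t' <= size t)%N.
Proof.
elim: t x => [|y t IH] x /=; first by exists [::].
case/andP=> /orP[/eqP<- | exy] /IH[t' pt' [lt' st']].
- by exists t' => //; split; last exact: ltnW.
- by exists (y :: t'); rewrite /= ?exy.
Qed.

Local Notation v x s k := (nth x (x :: s) k).

(* Shortcutting a walk: if a map pr sends the segment between the k1-th and
   the (k2+1)-th vertices to a lazy walk from vertex k1 to vertex k2+1,
   then replacing that segment by its image saves one step. *)
Lemma project_segment (pr : T -> T) x s k1 k2 :
  path e x s -> (k1 < k2 < size s)%N ->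
  pr (v x s k1.+1) = v x s k1 -> pr (v x s k2) = v x s k2.+1 ->
  (forall k, (k1 < k < k2)%N -> lazy_rel (pr (v x s k)) (pr (v x s k.+1))) ->
  exists2 t, path lazy_rel x t & last x t = last x s /\ size t = (size s).-1.
Proof.
move=> pe /andP[lt12 lt2s] pr_first pr_last pr_mid.
have lazy_e k : (k < size s)%N -> lazy_rel (v x s k) (v x s k.+1).
  by move=> ks; rewrite /lazy_rel (pathP x pe) ?orbT.
pose f j := if (j <= k1)%N then v x s j
            else if (j <= k2)%N then pr (v x s j) else v x s j.+1.
have f_low j : (j <= k1)%N -> f j = v x s j by rewrite /f => ->.
have f_mid j : (k1 < j <= k2)%N -> f j = pr (v x s j).
  by case/andP=> h1 h2; rewrite /f leqNgt h1 h2.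
have f_high j : (k2 <= j)%N -> f j = v x s j.+1.
  rewrite /f leq_eqVlt => /orP[/eqP<- | h2]; first by rewrite leqNgt lt12 leqnn.
  by rewrite leqNgt (leq_trans lt12 (ltnW h2)) leqNgt h2.
pose t := mkseq (fun j => f j.+1) (size s).-1.
have nth_t j : (j <= (size s).-1)%N -> v x t j = f j.
  by case: j => [|j] hj //=; rewrite nth_mkseq.
exists t.
- apply/(pathP x) => j; rewrite size_mkseq => hj.
  change (lazy_rel (v x t j) (v x t j.+1)).
  rewrite (nth_t j) ?(nth_t j.+1); [|lia..].
  have [jk1 | k1j | ->] := ltngtP j k1.
  + by rewrite !f_low; [apply: lazy_e | |]; lia.
  + have [jk2 | k2j] := ltnP j k2.
    * by rewrite !f_mid; [apply: pr_mid | |]; lia.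
    * by rewrite !f_high; [apply: lazy_e | |]; lia.
  + by rewrite f_low // f_mid ?pr_first /lazy_rel ?eqxx //; lia.
- rewrite size_mkseq (last_nth x) size_mkseq nth_t // f_high; last lia.
  by rewrite prednK ?(last_nth x) //; lia.
Qed.

End LazyWalks.

Lemma eq_on_segment (T : Type) (f : nat -> T) a b : (a <= b)%N ->
  (forall k, (a <= k < b)%N -> f k.+1 = f k) -> f b = f a.
Proof.
elim: b => [|b IH]; first by rewrite leqn0 => /eqP->.
rewrite leq_eqVlt => /orP[/eqP-> // | /[!ltnS] ab] steps.
rewrite steps ?ab ?ltnSn ?IH // => k /andP[ak kb].
by apply: steps; rewrite ak ltnS ltnW.
Qed.

Section HTG.
Variables (m n : nat) (l : int).
Local Notation V := (htg_vertex m n).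
Local Notation adj := (htg_adj l).

Lemma shortest_lazy_walk (x : V) s t : shortest_path l x s ->
  path (lazy_rel adj) x t -> last x t = last x s -> (size s <= size t)%N.
Proof.
case=> _ _ minimal /lazy_walk_shorten[t' pt' [lt' st']] lt.
exact: leq_trans (minimal _ pt' (etrans lt' lt)) st'.
Qed.

Lemma flat_edge_sym i (a b : V) : flat_edge i a b = flat_edge i b a.
Proof. by rewrite /flat_edge orbC. Qed.

Lemma flat_edge_row i (a b : V) : flat_edge i a b -> a.2 = b.2.
Proof.
by rewrite /flat_edge /flat_edge_dir /Defs.row => /orP[]/and5P[_ _ _ /eqP[h] _];
  apply/val_inj.
Qed.

Lemma flat_edge_col i (a b : V) : flat_edge i a b ->
  Defs.col a = if (Defs.col b <= i)%N then i.+1 else i.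
Proof.
by rewrite /flat_edge /flat_edge_dir => /orP[]/and5P[/eqP-> /eqP-> _ _ _];
  rewrite ?ltnn ?leqnn.
Qed.

Lemma adj_same_side i (a b : V) : adj a b -> ~~ flat_edge i a b ->
  ~~ jump_edge l a b -> (Defs.col b <= i)%N = (Defs.col a <= i)%N.
Proof.
rewrite /htg_adj => /orP[/orP[|/existsP[j fj]]|jab] //.
- by case/andP=> /eqP->.
- move=> nf _; have ji : nat_of_ord j != i by apply: contraNneq nf => <-.
  move: fj; rewrite /flat_edge /flat_edge_dir.
  by case/orP=> /and5P[/eqP-> /eqP-> _ _ _]; lia.
- by rewrite jab.
Qed.

(* Projecting onto a column c, keeping rows, maps every non-jump edge to a
   lazy step: vertical edges stay vertical, flat edges collapse. *)
Lemma adj_project (c : 'I_m) (a b : V) : adj a b -> ~~ jump_edge l a b ->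
  lazy_rel adj (c, a.2) (c, b.2).
Proof.
rewrite /lazy_rel /htg_adj => /orP[/orP[|/existsP[j fj]]|jab] //.
- by case/andP=> _ rows _; rewrite /vertical_edge eqxx rows !orbT.
- by rewrite (flat_edge_row fj) eqxx.
- by rewrite jab.
Qed.

Section Detour.
Variables (x : V) (s : seq V) (i k1 k2 : nat).
Hypotheses (pe : path adj x s) (lt12 : (k1 < k2)%N) (lt2s : (k2 < size s)%N).
Hypothesis flat1 : flat_edge i (pv x s k1) (pv x s k1.+1).
Hypothesis flat2 : flat_edge i (pv x s k2) (pv x s k2.+1).
Hypothesis noflat :
  forall k, (k1 < k < k2)%N -> ~~ flat_edge i (pv x s k) (pv x s k.+1).
Hypothesis nojump :
  forall k, (k1 < k < k2)%N -> ~~ jump_edge l (pv x s k) (pv x s k.+1).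

Let step k : (k < size s)%N -> adj (pv x s k) (pv x s k.+1).
Proof. by move=> ks; apply: (pathP x pe). Qed.

Lemma flat_detour_returns : (pv x s k2.+1).1 = (pv x s k1).1.
Proof.
have same_side : (Defs.col (pv x s k2) <= i)%N = (Defs.col (pv x s k1.+1) <= i)%N.
  apply: (@eq_on_segment _ (fun k => Defs.col (pv x s k) <= i)%N k1.+1 k2) => // k kin.
  by apply: adj_same_side; [apply: step | apply: noflat | apply: nojump]; lia.
apply: val_inj; change (Defs.col (pv x s k2.+1) = Defs.col (pv x s k1)).
have flat2' : flat_edge i (pv x s k2.+1) (pv x s k2) by rewrite flat_edge_sym.
by rewrite (flat_edge_col flat1) (flat_edge_col flat2') same_side.
Qed.

Lemma flat_detour_shortcut :
  exists2 t, path (lazy_rel adj) x t & last x t = last x s /\ size t = (size s).-1.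
Proof.
pose pr (a : V) : V := ((pv x s k1).1, a.2).
have pr_first : pr (pv x s k1.+1) = pv x s k1.
  by rewrite /pr -(flat_edge_row flat1); case: (pv x s k1).
have pr_last : pr (pv x s k2) = pv x s k2.+1.
  by rewrite /pr (flat_edge_row flat2) -flat_detour_returns; case: (pv x s k2.+1).
have pr_mid k : (k1 < k < k2)%N -> lazy_rel adj (pr (pv x s k)) (pr (pv x s k.+1)).
  by move=> kin; apply: adj_project; [apply: step | apply: nojump]; lia.
exact: project_segment pe (introT andP (conj lt12 lt2s)) pr_first pr_last pr_mid.
Qed.

End Detour.

Lemma jump_between_flat_edges (x : V) s i k1 k2 :
  shortest_path l x s -> (k1 < k2)%N -> (k2 < size s)%N ->
  flat_edge i (pv x s k1) (pv x s k1.+1) ->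
  flat_edge i (pv x s k2) (pv x s k2.+1) ->
  (forall k, (k1 < k < k2)%N -> ~~ flat_edge i (pv x s k) (pv x s k.+1)) ->
  exists k, (k1 < k < k2)%N /\ jump_edge l (pv x s k) (pv x s k.+1).
Proof.
move=> sp lt12 lt2s flat1 flat2 noflat.
have [/hasP[k] | /hasPn nojump] := boolP
    (has (fun k => jump_edge l (pv x s k) (pv x s k.+1)) (iota k1.+1 (k2 - k1.+1))).
  by rewrite mem_iota => kin jk; exists k; split => //; lia.
have {}nojump k : (k1 < k < k2)%N -> ~~ jump_edge l (pv x s k) (pv x s k.+1).
  by move=> kin; apply: nojump; rewrite mem_iota; lia.
have [pe _ _] := sp.
have [t pt [lt st]] := flat_detour_shortcut pe lt12 lt2s flat1 flat2 noflat nojump.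
have := shortest_lazy_walk sp pt lt; rewrite st.
by move: lt2s; case: (size s) => // len _; rewrite ltnn.
Qed.

(* Part two: a shortest path without jump edges uses at most one flat edge
   between columns i and i+1; otherwise the first two would contradict
   part one. *)
Lemma unique_flat_edge_without_jumps (x : V) s i k1 k2 :
  shortest_path l x s ->
  (forall k, (k < size s)%N -> ~~ jump_edge l (pv x s k) (pv x s k.+1)) ->
  (k1 < size s)%N -> (k2 < size s)%N ->
  flat_edge i (pv x s k1) (pv x s k1.+1) ->
  flat_edge i (pv x s k2) (pv x s k2.+1) -> k1 = k2.
Proof.
move=> sp nojump.
wlog le12 : k1 k2 / (k1 <= k2)%N.
  move=> sym lt1s lt2s flat1 flat2.
  have [le12 | /ltnW le21] := leqP k1 k2; first exact: sym.
  by symmetry; apply: sym.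
move: le12; rewrite leq_eqVlt => /orP[/eqP // | lt12] lt1s lt2s flat1 flat2.
have later_flat : exists k,
    [&& (k1 < k)%N, (k < size s)%N & flat_edge i (pv x s k) (pv x s k.+1)].
  by exists k2; rewrite lt12 lt2s flat2.
have [k /and3P[k1k ks flatk] first] := ex_minnP later_flat.
have noflat j : (k1 < j < k)%N -> ~~ flat_edge i (pv x s j) (pv x s j.+1).
  case/andP=> k1j jk; apply/negP=> flatj.
  by have := first j; rewrite k1j flatj (ltn_trans jk ks) leqNgt jk => /(_ isT).
have [j [/andP[_ jk] jumpj]] := jump_between_flat_edges sp k1k ks flat1 flatk noflat.
by rewrite (negPf (nojump j (ltn_trans jk ks))) in jumpj.
Qed.

End HTG.

Theorem lemma6p2 (m n : nat) (l : int) (x : htg_vertex m n) (s : seq (htg_vertex m n)) :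
  htg_params m n l ->
  shortest_path l x s ->
  (forall (i k1 k2 : nat), (i.+1 < m)%N -> (k1 < k2)%N -> (k2 < size s)%N ->
     flat_edge i (pv x s k1) (pv x s k1.+1) ->
     flat_edge i (pv x s k2) (pv x s k2.+1) ->
     (forall k, (k1 < k < k2)%N -> ~~ flat_edge i (pv x s k) (pv x s k.+1)) ->
     exists k, (k1 < k < k2)%N /\ jump_edge l (pv x s k) (pv x s k.+1))
  /\
  ((forall k, (k < size s)%N -> ~~ jump_edge l (pv x s k) (pv x s k.+1)) ->
   forall (i k1 k2 : nat), (i.+1 < m)%N -> (k1 < size s)%N -> (k2 < size s)%N ->
     flat_edge i (pv x s k1) (pv x s k1.+1) ->
     flat_edge i (pv x s k2) (pv x s k2.+1) -> k1 = k2).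
Proof.
move=> _ sp; split=> [i k1 k2 _ | nojump i k1 k2 _].
- exact: jump_between_flat_edges sp.
- exact: unique_flat_edge_without_jumps sp nojump.
Qed.
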